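(* Let $X$ be a continuous real-valued random variable and fix an integer $K \ge 1$. For each $n > K$, let $Z = Z_n$ be the random variable produced by the SMOTE-$K$ procedure (described in the context) from an i.i.d. sample $X_1, \dots, X_n$ drawn from $X$. Then $Z$ converges to $X$ in probability as $n \to \infty$.
   Context: SMOTE-$K$ procedure: given a sample $X_1,\dots,X_n$ of real numbers and a rank $1 \le K \le n-1$: (1) choose an index $i$ uniformly at random from $\{1,\dots,n\}$; (2) find the $K$ nearest neighbors $X_{i,(1)}, \dots, X_{i,(K)}$ of $X_i$ among the other sample points $\{X_j: j\ne i\}$, where $X_{i,(k)}$ realizes the $k$-th smallest of the distances $|X_j - X_i|$, $j\neq i$; (3) choose one of them, $X_{i,(k)}$, uniformly at random; (4) draw $\lambda \sim U(0,1)$ independently; (5) output $Z = X_i + \lambda (X_{i,(k)} - X_i)$. The random variable $X$ appearing in the conclusion is taken to be the sample point $X_i$ from which $Z$ is generated (which has the distribution of $X$), so the convergence means $P(|Z - X_i| > \varepsilon) \to 0$ for every $\varepsilon > 0$. *)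

From HB Require Import structures.
From mathcomp Require Import all_boot all_order all_algebra.
From mathcomp Require Import all_classical all_reals all_analysis.
Set Implicit Arguments. Unset Strict Implicit. Unset Printing Implicit Defensive.
Import Order.TTheory GRing.Theory Num.Theory.
Local Open Scope ring_scope.
Local Open Scope classical_set_scope.

Section Smote.
Variable R : realType.

Definition others (s : seq R) (i : nat) : seq R :=
  [seq s`_j | j <- iota 0 (size s) & j != i].

(* the (k+1)-th nearest neighbour of s`_i among the other points
   (k is 0-based: k = 0 is the nearest neighbour); ties in the distance are
   broken by the (stable) sort, i.e. by sample index *)
Definition knn (s : seq R) (i k : nat) : R :=
  nth 0 (sort (fun a b => `|a - s`_i| <= `|b - s`_i|) (others s i)) k.

Definition smote (s : seq R) (i k : nat) (l : R) : R :=
  s`_i + l * (knn s i k - s`_i).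

End Smote.

From HB Require Import structures.
From mathcomp Require Import all_boot all_order all_algebra.
From mathcomp Require Import all_classical all_reals all_analysis.
From mathcomp Require Import measurable_realfun lra zify.
Set Implicit Arguments. Unset Strict Implicit. Unset Printing Implicit Defensive.
Import Order.TTheory GRing.Theory Num.Theory.
Local Open Scope ring_scope.
Local Open Scope classical_set_scope.

(* Write i, k and l for the chosen index, neighbour rank and interpolation
   weight, so that |Z - X_i| = l |X_(i,(k)) - X_i| with k < K.  When l lies in
   [0, 1], the event |Z - X_i| > eps therefore forces fewer than K of the other
   sample points to lie within eps of X_i.  Cut the window [-N eps, N eps) into
   2N cells of width eps and the indices into K blocks of n/K consecutive
   indices.  If X_i lies in a cell C of the window and has fewer than K
   neighbours within eps, some block contains no other point of C; by
   independence, for given i, C and block this has probability at most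
   p (1 - p)^(n/K - 1) / n with p = P(X in C).  Hence
     P(|Z - X_i| > eps) <= P(X outside the window)
                           + K sum_C P(X in C) (1 - P(X in C))^(n/K - 1);
   the sum vanishes as n -> oo and the first term as N -> oo. *)

Lemma sorted_nth_gtE (R : realDomainType) (T : Type) (x0 : T) (f : T -> R)
    (s : seq T) (k : nat) (r : R) :
  sorted (fun a b => f a <= f b) s -> (k < size s)%N ->
  (r < f (nth x0 s k)) = (count (fun y => (f y <= r)%R) s <= k)%N.
Proof.
have f_trans : transitive (fun a b => f a <= f b) by move=> ? ? ? /le_trans; apply.
elim: s k => [//|x s IHs] k /= s_sorted k_lt.
have x_min := order_path_min f_trans s_sorted.
have none_le : r < f x -> count (fun y => f y <= r) s = 0%N.
  move=> rx; apply/eqP; rewrite -leqn0 leqNgt -has_count -all_predC.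
  by apply: sub_all x_min => y /= xy; rewrite -ltNge (lt_le_trans rx xy).
case: k k_lt => [|k] k_lt /=; first by case: (ltP r (f x)) => // /none_le ->.
rewrite IHs ?(path_sorted s_sorted) //.
by case: (ltP r (f x)) => [/none_le ->|_]; rewrite ?add1n ?ltnS.
Qed.

Section smote_distance.
Variable R : realType.

Lemma size_others (s : seq R) i : (i < size s)%N -> size (others s i) = (size s).-1.
Proof.
move=> i_lt; rewrite size_map size_filter.
have := count_predC (pred1 i) (iota 0 (size s)).
rewrite size_iota (count_uniq_mem _ (iota_uniq _ _)) mem_iota i_lt add1n.
by move=> e; rewrite -[in RHS]e.
Qed.

Lemma smote_farE (s : seq R) i k l r : (i < size s)%N -> (k < (size s).-1)%N ->
  (r < `|smote s i k l - s`_i|) =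
  (count (fun y => (`|l| * `|y - s`_i| <= r)%R) (others s i) <= k)%N.
Proof.
move=> i_lt k_lt; rewrite /smote addrAC subrr add0r normrM.
have [->|l_neq0] := eqVneq l 0.
  rewrite normr0 mul0r; under eq_count do rewrite mul0r.
  case: (ltP r 0) => r0; last by rewrite count_predT size_others // leqNgt k_lt.
  by rewrite (@eq_count _ _ pred0) ?count_pred0 // => y; rewrite /= leNgt r0.
set f := fun y => `|y - s`_i|.
have sorted_knn : sorted (fun a b => f a <= f b) (sort (fun a b => f a <= f b) (others s i)).
  by apply: sort_sorted => a b; exact: le_total.
change `|knn s i k - s`_i| with (f (nth 0 (sort (fun a b => f a <= f b) (others s i)) k)).
rewrite mulrC -ltr_pdivrMr ?normr_gt0 // sorted_nth_gtE //; last first.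
  by rewrite size_sort size_others.
rewrite (permP (permEl (perm_sort _ _))); congr (_ <= _)%N; apply: eq_count => y.
by rewrite /= ler_pdivlMr ?normr_gt0 // mulrC.
Qed.

Lemma smote_map_farE n (x : nat -> R) i k l r : (i < n)%N -> (k < n.-1)%N ->
  (r < `|smote [seq x j | j <- iota 0 n] i k l - x i|) =
  (count (fun j => `|l| * `|x j - x i| <= r)%R [seq j <- iota 0 n | j != i] <= k)%N.
Proof.
set s := [seq x j | j <- iota 0 n]; move=> i_lt k_lt.
have s_size : size s = n by rewrite size_map size_iota.
have s_nth j : (j < n)%N -> s`_j = x j.
  by move=> j_lt; rewrite (nth_map 0%N) ?nth_iota ?size_iota.
rewrite -[in LHS](s_nth i i_lt) smote_farE ?s_size // /others s_size count_map.
congr (_ <= _)%N; apply: eq_in_count => j; rewrite mem_filter mem_iota => /andP[_ j_lt].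
by rewrite /= s_nth // s_nth.
Qed.

End smote_distance.

Lemma count_iota_blocks_ge (p : pred nat) (K L n : nat) : (K * L <= n)%N ->
  (forall b, (b < K)%N -> has p (iota (b * L) L)) -> (K <= count p (iota 0 n))%N.
Proof.
move=> KLn has_p; rewrite -(subnKC KLn) iotaD count_cat; apply: leq_trans (leq_addr _ _).
elim: K {KLn} has_p => [//|K IHK] has_p.
rewrite mulSnr iotaD count_cat add0n -addn1 leq_add //.
  by apply: IHK => b b_lt; apply: has_p; rewrite ltnS ltnW.
by rewrite -has_count has_p.
Qed.

Lemma count_iota_neq_ge (m L n i : nat) : (m + L <= n)%N ->
  (L - 1 <= count (fun j => (j \in iota m L) && (j != i)) (iota 0 n))%N.
Proof.
move=> mLn; rewrite -(subnKC mLn) !iotaD !add0n !count_cat.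
rewrite (@eq_in_count _ _ (predC (pred1 i)) (iota m L)); last by move=> j ->.
have := count_predC (pred1 i) (iota m L).
rewrite size_iota (count_uniq_mem _ (iota_uniq _ _)).
by case: (i \in iota m L) => /=; lia.
Qed.

Lemma prod_le_exp_count (R : numDomainType) (r : seq nat) (a : nat -> R) (S : pred nat) (q : R) :
  0 <= q -> (forall j, 0 <= a j <= 1) -> (forall j, S j -> a j = q) ->
  \prod_(j <- r) a j <= q ^+ count S r.
Proof.
move=> q_ge0 a01 aS; elim: r => [|j r IHr]; first by rewrite big_nil.
have [a_ge0 a_le1] := andP (a01 j).
rewrite big_cons /=; case: (boolP (S j)) => [/aS ->|_]; first by rewrite add1n exprS ler_wpM2l.
by rewrite add0n (le_trans _ IHr) // ler_piMl // prodr_ge0 // => k _; case/andP: (a01 k).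
Qed.

Lemma measure_bigcup_ord_le d (T : ringOfSetsType d) (R : realFieldType)
    (mu : {content set T -> \bar R}) (F : nat -> set T) (n : nat) :
  (forall k, measurable (F k)) ->
  (mu (\bigcup_(k < n) F k) <= \sum_(k < n) mu (F k))%E.
Proof.
move=> mF; rewrite bigcup_mkord.
by apply: content_subadditive => //; exact: bigsetU_measurable.
Qed.

Lemma measurable_fun_count d (T : measurableType d) (I : Type) (s : seq I)
    (p : I -> T -> bool) :
  (forall j, measurable_fun setT (p j)) ->
  measurable_fun setT (fun w => count (p^~ w) s).
Proof.
move=> mp; elim: s => [|j s IHs] /=; first exact: measurable_cst.
by apply: measurable_fun_addn IHs; apply: measurableT_comp (mp j).
Qed.

Section cells.
Variables (R : realType) (eps : R).

Definition window (N : nat) : set R := `[- (N%:R * eps), N%:R * eps[%classic.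

Definition cell (N t : nat) : set R :=
  `[(t%:R - N%:R) * eps, (t%:R - N%:R + 1) * eps[%classic.

Lemma measurable_window N : measurable (window N).
Proof. exact: measurable_itv. Qed.

Lemma measurable_cell N t : measurable (cell N t).
Proof. exact: measurable_itv. Qed.

Hypothesis eps_gt0 : 0 < eps.

Lemma window_cell N x : window N x -> exists2 t, (t < 2 * N)%N & cell N t x.
Proof.
rewrite /window /= in_itv /= => /andP[x_ge x_lt].
have y_ge : - N%:R <= x / eps by rewrite ler_pdivlMr // mulNr.
have y_lt : x / eps < N%:R by rewrite ltr_pdivrMr.
set t := Num.trunc (x / eps + N%:R).
have /andP[t_le t_gt] : t%:R <= x / eps + N%:R < t.+1%:R by apply: truncn_itv; lra.
exists t; first by rewrite -(ltr_nat R) natrM; lra.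
rewrite /cell /= in_itv /= -ler_pdivlMr // -ltr_pdivrMr //.
by rewrite -natr1 in t_gt; apply/andP; split; lra.
Qed.

Lemma cell_dist N t x y : cell N t x -> cell N t y -> `|x - y| < eps.
Proof.
rewrite /cell /= !in_itv /= => /andP[x_ge x_lt] /andP[y_ge y_lt].
by rewrite ltr_norml; apply/andP; split; lra.
Qed.

Lemma window_nondecreasing : nondecreasing_seq window.
Proof.
move=> N M NM; apply/subsetPset; rewrite /window => x /=; rewrite !in_itv /=.
have : N%:R * eps <= M%:R * eps by rewrite ler_pM2r // ler_nat.
by move=> ? /andP[? ?]; apply/andP; split; lra.
Qed.

Lemma bigcup_window : \bigcup_N window N = setT.
Proof.
apply/seteqP; split => // x _; exists (Num.trunc (`|x| / eps)).+1 => //.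
have /andP[_] := truncn_itv (divr_ge0 (normr_ge0 x) (ltW eps_gt0)).
rewrite ltr_pdivrMr // /window /= in_itv /=.
by move: (Num.trunc _).+1%:R => M; rewrite ltr_norml => /andP[? ?]; apply/andP; split; lra.
Qed.

End cells.

Lemma cvg0_le_param (R : realType) (u a : R^nat) (c : nat -> R^nat) :
  (\forall n \near \oo, 0 <= u n /\ forall N, u n <= a N + c N n) ->
  a @ \oo --> 0 -> (forall N, c N @ \oo --> 0) -> u @ \oo --> 0.
Proof.
move=> u_bound a_cvg0 c_cvg0; apply/cvgr0Pnorm_lt => e e_gt0.
have e2_gt0 : 0 < e / 2 by rewrite divr_gt0.
move/cvgr0Pnorm_lt: a_cvg0 => /(_ _ e2_gt0) [N _ /(_ N (leqnn N)) /= aN].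
move/cvgr0Pnorm_lt: (c_cvg0 N) => /(_ _ e2_gt0).
apply: filterS2 u_bound => n [u_ge0 /(_ N) u_le] cNn.
rewrite ger0_norm //; have := ler_norm (a N); have := ler_norm (c N n); lra.
Qed.

Lemma cvg_mul_exp_divn (R : realType) (K : nat) (p : R) : (0 < K)%N -> 0 <= p <= 1 ->
  (fun n => p * (1 - p) ^+ (n %/ K - 1)) @ \oo --> 0.
Proof.
move=> K_gt0 /andP[p_ge0 p_le1]; have [->|p_neq0] := eqVneq p 0.
  by apply/cvgr0Pnorm_lt => e e_gt0; near=> n; rewrite mul0r normr0.
have p_gt0 : 0 < p by rewrite lt0r p_neq0.
have q_lt1 : `|1 - p| < 1 by rewrite ger0_norm ?subr_ge0 //; lra.
rewrite -(mulr0 p); apply: cvgMr; apply: cvg_comp (cvg_expr q_lt1).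
exact: cvg_comp (cvg_divnr _ K_gt0) (cvg_subnr 1%N).
Unshelve. all: by end_near. Qed.

Section smote_consistency.
Local Open Scope ereal_scope.
Variables (R : realType) (d : measure_display) (T : measurableType d).
Variables (P : probability T R) (X : {RV P >-> R}) (K : nat).
Variables (Xs : nat -> {RV P >-> R}) (Idx kap : nat -> {RV P >-> nat}).
Variable lam : nat -> {RV P >-> R}.
Hypothesis K_gt0 : (0 < K)%N.
Hypothesis Xs_law : forall (j : nat) (B : set R), measurable B ->
  P (Xs j @^-1` B) = P (X @^-1` B).
Hypothesis Idx_uniform : forall n i, (K < n)%N -> (i < n)%N ->
  P (Idx n @^-1` [set i]) = (n%:R^-1)%:E.
Hypothesis Idx_lt : forall n w, (K < n)%N -> (Idx n w < n)%N.
Hypothesis kap_uniform : forall n k, (K < n)%N -> (k < K)%N ->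
  P (kap n @^-1` [set k]) = (K%:R^-1)%:E.
Hypothesis kap_lt : forall n w, (K < n)%N -> (kap n w < K)%N.
Hypothesis lam_uniform : forall n (B : set R), (K < n)%N -> measurable B ->
  P (lam n @^-1` B) = lebesgue_measure (B `&` `[0%R, 1%R]).
Hypothesis indep : forall n (B : nat -> set R) (i k : nat) (L : set R), (K < n)%N ->
  (forall j, measurable (B j)) -> measurable L ->
  P ((\bigcap_(j in [set j | (j < n)%N]) (Xs j @^-1` B j))
       `&` (Idx n @^-1` [set i]) `&` (kap n @^-1` [set k]) `&` (lam n @^-1` L))
  = (\prod_(j < n) P (Xs j @^-1` B j)) * P (Idx n @^-1` [set i])
       * P (kap n @^-1` [set k]) * P (lam n @^-1` L).

Definition pX (B : set R) : R := fine (P (X @^-1` B)).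

Lemma pXE B : measurable B -> P (X @^-1` B) = (pX B)%:E.
Proof. by move=> mB; rewrite fineK // fin_num_measure //; exact: measurable_funPTI. Qed.

Lemma pX_itv B : measurable B -> (0 <= pX B <= 1)%R.
Proof.
move=> mB; have mXB := measurable_funPTI X mB.
by rewrite -!lee_fin -pXE // measure_ge0 probability_le1.
Qed.

Lemma pXC B : measurable B -> pX (~` B) = (1 - pX B)%R.
Proof.
move=> mB; apply/EFin_inj; rewrite -pXE ?EFinB -?pXE //; last exact: measurableC.
by rewrite -preimage_setC probability_setC //; exact: measurable_funPTI.
Qed.

Lemma pXT : pX setT = 1%R.
Proof. by rewrite /pX preimage_setT probability_setT. Qed.

Definition rect n (B : nat -> set R) i :=
  (\bigcap_(j in [set j | (j < n)%N]) Xs j @^-1` B j) `&` Idx n @^-1` [set i].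

Lemma measurable_rect n B i : (forall j, measurable (B j)) -> measurable (rect n B i).
Proof.
move=> mB; apply: measurableI; last exact: measurable_funPTI.
by apply: bigcap_measurableType => j _; exact: measurable_funPTI.
Qed.

Lemma P_rect_le n B i : (K < n)%N -> (i < n)%N -> (forall j, measurable (B j)) ->
  P (rect n B i) <= ((\prod_(j <- iota 0 n) pX (B j)) / n%:R)%:E.
Proof.
move=> Kn i_lt mB.
pose piece k := rect n B i `&` kap n @^-1` [set k] `&` lam n @^-1` setT.
have m_piece k : measurable (piece k).
  apply: measurableI; last exact: measurable_funPTI.
  by apply: measurableI; [exact: measurable_rect|exact: measurable_funPTI].
have rect_sub : rect n B i `<=` \bigcup_(k < K) piece k.
  by move=> w rect_w; exists (kap n w); [exact: kap_lt|].
have m_union : measurable (\bigcup_(k < K) piece k) by exact: bigcup_measurable.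
have m_rect := measurable_rect n i mB.
apply: le_trans (le_measure _ (mem_set m_rect) (mem_set m_union) rect_sub) _.
apply: le_trans (measure_bigcup_ord_le _ _ m_piece) _.
rewrite (eq_bigr (fun=> ((\prod_(j <- iota 0 n) pX (B j)) / n%:R / K%:R)%:E)) => [|k _].
  by rewrite sumEFin sumr_const card_ord -[(_ *+ K)%R]mulr_natr divfK // pnatr_eq0 -lt0n.
rewrite [LHS](indep i k Kn mB measurableT) Idx_uniform // kap_uniform // preimage_setT.
under [in LHS]eq_bigr do rewrite Xs_law // pXE //.
rewrite prodEFin probability_setT mule1 -!EFinM.
by rewrite -(big_mkord xpredT (fun j => pX (B j))) /index_iota subn0.
Qed.

Definition far (eps : R) n := [set w | (eps < `|smote [seq Xs j w | j <- iota 0 n]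
  (Idx n w) (kap n w) (lam n w) - Xs (Idx n w) w|)%R].

Definition near_count (eps : R) n i w :=
  count (fun j => `|lam n w| * `|Xs j w - Xs i w| <= eps)%R [seq j <- iota 0 n | j != i].

Lemma farE eps n : (K < n)%N ->
  far eps n = [set w | (near_count eps n (Idx n w) w <= kap n w)%N].
Proof.
move=> Kn; have k_lt w : (kap n w < n.-1)%N by have := kap_lt w Kn; lia.
apply/funext => w.
exact (congr1 is_true (smote_map_farE (fun j => Xs j w) (lam n w) eps (Idx_lt w Kn) (k_lt w))).
Qed.

Lemma measurable_far eps n : (K < n)%N -> measurable (far eps n).
Proof.
move=> Kn; rewrite farE //.
have -> : [set w | (near_count eps n (Idx n w) w <= kap n w)%N] =
    \bigcup_i (Idx n @^-1` [set i] `&` [set w | (near_count eps n i w <= kap n w)%N]).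
  by apply/seteqP; split => [w le_w|w [i _ [/= <-]]] //; exists (Idx n w).
apply: bigcupT_measurable => i; apply: measurableI; first exact: measurable_funPTI.
have : measurable_fun setT (fun w => near_count eps n i w <= kap n w)%N.
  apply: measurable_fun_leq; last exact: measurable_funP.
  apply: measurable_fun_count => j; apply: measurable_fun_ler => //.
  apply: measurable_funM; first exact: measurableT_comp (measurable_funP _).
  exact: measurableT_comp (measurable_funB (measurable_funP _) (measurable_funP _)).
by move=> /(_ measurableT [set true]); rewrite setTI; apply.
Qed.

Definition outside eps N n i :=
  rect n (fun j => if j == i then ~` window eps N else setT) i.

(* X_i lies in cell t while no other point of the b-th block of n %/ K
   consecutive indices does. *)
Definition lonely_shape eps N n t b i j : set R :=
  if j == i then cell eps N t
  else if j \in iota (b * (n %/ K)) (n %/ K) then ~` cell eps N t else setT.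

Definition lonely eps N n t b i := rect n (lonely_shape eps N n t b i) i.

Definition lonely_bound eps N n t : R :=
  (pX (cell eps N t) * (1 - pX (cell eps N t)) ^+ (n %/ K - 1))%R.

Lemma measurable_lonely_shape eps N n t b i j : measurable (lonely_shape eps N n t b i j).
Proof.
rewrite /lonely_shape; case: eqP => _; first exact: measurable_cell.
by case: ifP => // _; apply: measurableC; exact: measurable_cell.
Qed.

Lemma measurable_outside eps N n i : measurable (outside eps N n i).
Proof.
apply: measurable_rect => j; case: eqP => // _.
by apply: measurableC; exact: measurable_window.
Qed.

Lemma measurable_lonely eps N n t b i : measurable (lonely eps N n t b i).
Proof. exact: measurable_rect (measurable_lonely_shape _ _ _ _ _ _). Qed.

Lemma P_outside_le eps N n i : (K < n)%N -> (i < n)%N ->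
  P (outside eps N n i) <= (pX (~` window eps N) / n%:R)%:E.
Proof.
move=> Kn i_lt; apply: le_trans (P_rect_le Kn i_lt _) _.
  by move=> j; case: eqP => // _; apply: measurableC; exact: measurable_window.
rewrite (bigD1_seq i) ?mem_iota ?iota_uniq //= eqxx big1_seq ?mulr1 //.
by move=> j /andP[/negPf -> _]; exact: pXT.
Qed.

Lemma P_lonely_le eps N n t b i : (K < n)%N -> (i < n)%N -> (b < K)%N ->
  P (lonely eps N n t b i) <= (lonely_bound eps N n t / n%:R)%:E.
Proof.
move=> Kn i_lt b_lt.
apply: le_trans (P_rect_le Kn i_lt (measurable_lonely_shape eps N n t b i)) _.
rewrite lee_fin ler_wpM2r ?invr_ge0 // /lonely_bound.
set L := (n %/ K)%N; set p := pX (cell eps N t).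
have /andP[p_ge0 p_le1] : (0 <= p <= 1)%R by exact: pX_itv (measurable_cell _ _ _).
rewrite (bigD1_seq i) ?mem_iota ?iota_uniq //= /lonely_shape eqxx.
rewrite ler_wpM2l // big_mkcond /=.
pose in_block_not_i j := (j \in iota (b * L)%N L) && (j != i).
apply: le_trans (@prod_le_exp_count _ _ _ in_block_not_i (1 - p)%R _ _ _) _.
- by rewrite subr_ge0.
- move=> j; case: (j != i); last by rewrite ler01 lexx.
  exact: pX_itv (measurable_lonely_shape _ _ _ _ _ _ _).
- by move=> j /andP[j_blk /negPf j_neq]; rewrite j_neq j_blk pXC //; exact: measurable_cell.
apply: ler_wiXn2l; rewrite ?subr_ge0 ?lerBlDr ?lerDl //.
apply: count_iota_neq_ge; rewrite -mulSnr (leq_trans _ (leq_trunc_div n K)) //.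
by rewrite mulnC leq_mul2l b_lt orbT.
Qed.

Lemma far_cover eps N n : (0 < eps)%R -> (K < n)%N ->
  far eps n `<=` lam n @^-1` (~` `[0%R, 1%R]) `|`
    \bigcup_(i < n) (outside eps N n i `|`
      \bigcup_(t < 2 * N) \bigcup_(b < K) lonely eps N n t b i).
Proof.
move=> eps_gt0 Kn w; rewrite farE // /= => few.
have [lam01|] := pselect (`[0%R, 1%R] (lam n w)); last by left.
right; exists (Idx n w); first exact: Idx_lt.
set i := Idx n w in few *; set L := (n %/ K)%N.
have rect_w B : (forall j, (j < n)%N -> B j (Xs j w)) -> rect n B i w.
  by move=> Bw; split => // j /Bw.
have [Xi_in|Xi_out] := pselect (window eps N (Xs i w)); last first.
  by left; apply: rect_w => j _; case: eqP => [->|].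
right; have [t t_lt Xi_t] := window_cell eps_gt0 Xi_in.
exists t => //.
apply: contrapT => no_lonely.
have crowded b : (b < K)%N ->
    has (fun j => (`|lam n w| * `|Xs j w - Xs i w| <= eps)%R && (j != i)) (iota (b * L) L).
  move=> b_lt; apply/negPn/negP; rewrite -all_predC => /allP far_b.
  apply: no_lonely; exists b => //; apply: rect_w => j _; rewrite /lonely_shape.
  case: eqP => [->//|/eqP j_neq]; case: ifP => // j_blk Xj_t.
  move: (far_b j j_blk); rewrite /= j_neq andbT => /negP; apply.
  move: lam01; rewrite /= in_itv /= => /andP[lam_ge0 lam_le1].
  apply: le_trans (ltW (cell_dist Xj_t Xi_t)).
  by rewrite ler_piMl // ger0_norm.
have : (K <= near_count eps n i w)%N.
  rewrite /near_count count_filter; apply: count_iota_blocks_ge crowded.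
  by rewrite mulnC leq_trunc_div.
by have := kap_lt w Kn; lia.
Qed.

Lemma P_far_le eps N n : (0 < eps)%R -> (K < n)%N ->
  P (far eps n) <=
  (pX (~` window eps N) + \sum_(t < 2 * N) K%:R * lonely_bound eps N n t)%:E.
Proof.
move=> eps_gt0 Kn.
set G := (pX (~` window eps N) + \sum_(t < 2 * N) K%:R * lonely_bound eps N n t)%R.
have m_lonely i t : measurable (\bigcup_(b < K) lonely eps N n t b i).
  by apply: bigcup_measurable => b _; exact: measurable_lonely.
have m_lonely_any i : measurable (\bigcup_(t < 2 * N) \bigcup_(b < K) lonely eps N n t b i).
  exact: bigcup_measurable.
have m_piece i : measurable (outside eps N n i `|`
    \bigcup_(t < 2 * N) \bigcup_(b < K) lonely eps N n t b i).
  by apply: measurableU; [exact: measurable_outside|].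
have m_lam : measurable (lam n @^-1` (~` `[0%R, 1%R]%classic)).
  by apply/measurable_funPTI/measurableC; exact: measurable_itv.
have P_lam0 : P (lam n @^-1` (~` `[0%R, 1%R]%classic)) = 0.
  by rewrite lam_uniform ?setICl ?measure0 //; apply: measurableC; exact: measurable_itv.
have piece_le i : (i < n)%N -> P (outside eps N n i `|`
    \bigcup_(t < 2 * N) \bigcup_(b < K) lonely eps N n t b i) <= (G / n%:R)%:E.
  move=> i_lt; apply: le_trans (measureU2 _ (measurable_outside _ _ _ _) (m_lonely_any i)) _.
  rewrite /G mulrDl EFinD leeD ?P_outside_le //.
  apply: le_trans (measure_bigcup_ord_le _ _ (m_lonely i)) _.
  rewrite mulr_suml -sumEFin lee_sum // => t _.
  apply: le_trans (measure_bigcup_ord_le _ _ (fun b => measurable_lonely _ _ _ _ b i)) _.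
  apply: (@le_trans _ _ (\sum_(b < K) (lonely_bound eps N n t / n%:R)%:E)).
    by apply: lee_sum => b _; exact: P_lonely_le.
  by rewrite sumEFin sumr_const card_ord -[(_ *+ K)%R]mulr_natl mulrA.
have m_pieces := bigcup_measurable (fun i (_ : `I_n i) => m_piece i).
have m_cover := measurableU _ _ m_lam m_pieces.
apply: le_trans (le_measure _ (mem_set (measurable_far eps Kn)) (mem_set m_cover)
  (far_cover N eps_gt0 Kn)) _.
apply: le_trans (measureU2 _ m_lam m_pieces) _.
rewrite [X in X + _]P_lam0 add0e; apply: le_trans (measure_bigcup_ord_le _ _ m_piece) _.
apply: (@le_trans _ _ (\sum_(i < n) (G / n%:R)%:E)).
  by apply: lee_sum => i _; exact: piece_le.
rewrite sumEFin sumr_const card_ord -[(_ *+ n)%R]mulr_natr divfK //.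
by rewrite pnatr_eq0 -lt0n (leq_trans _ Kn).
Qed.

Lemma window_escape_cvg0 eps : (0 < eps)%R ->
  (fun N => pX (~` window eps N)) @ \oo --> 0%R.
Proof.
move=> eps_gt0; pose F N := X @^-1` (~` window eps N).
have mF N : measurable (F N).
  by apply/measurable_funPTI/measurableC; exact: measurable_window.
have F_dec : nonincreasing_seq F.
  move=> N M NM; apply/subsetPset; apply: preimage_subset; apply: subsetC.
  exact/subsetPset/window_nondecreasing.
have F_cap : \bigcap_N F N = set0.
  by rewrite -preimage_bigcap -setC_bigcup bigcup_window // setCT preimage_set0.
have PF0_lt : P (F 0%N) < +oo.
  by rewrite (le_lt_trans (probability_le1 _ (mF 0%N))) ?ltry.
have := nonincreasing_cvg_mu PF0_lt mF _ F_dec.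
by rewrite F_cap measure0 => /(_ measurable0) /fine_cvgP[].
Qed.

Theorem far_cvg0 eps : (0 < eps)%R -> (fun n => P (far eps n)) @ \oo --> 0.
Proof.
move=> eps_gt0; have Kn_near : \forall n \near \oo, (K < n)%N by exact: nbhs_infty_gt.
apply/fine_cvgP; split.
  by apply: filterS Kn_near => n Kn; exact/fin_num_measure/measurable_far.
apply: (cvg0_le_param _ (window_escape_cvg0 eps_gt0)) => [|N].
  apply: filterS Kn_near => n Kn; split; first exact/fine_ge0/measure_ge0.
  move=> N; have m_far := measurable_far eps Kn.
  by rewrite -lee_fin fineK ?fin_num_measure //; exact: P_far_le.
rewrite /= -[X in _ --> X](@big1_eq R 0%R +%R _ (index_enum 'I_(2 * N)) xpredT).
apply: (cvg_big add_continuous) => t _.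
rewrite -(mulr0 K%:R); apply: cvgMr.
exact: cvg_mul_exp_divn K_gt0 (pX_itv (measurable_cell _ _ _)).
Qed.

End smote_consistency.

Theorem corollary2 (R : realType) (d : measure_display) (T : measurableType d)
  (P : probability T R)
  (X : {RV P >-> R})                 (* the continuous random variable X *)
  (K : nat)
  (Xs : nat -> {RV P >-> R})         (* the sample: X_1, ..., X_n are Xs 0, ..., Xs n.-1 *)
  (I : nat -> {RV P >-> nat})        (* I n : the chosen index, uniform on {0,...,n-1} *)
  (kap : nat -> {RV P >-> nat})      (* kap n : the chosen neighbour rank (0-based), uniform on {0,...,K-1} *)
  (lam : nat -> {RV P >-> R})        (* lam n : lambda ~ U(0,1) *)
  :
  (1 <= K)%N ->
  (* X is continuous: no atoms *)
  (forall x : R, P (X @^-1` [set x]) = 0%E) ->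
  (* the sample points are distributed as X *)
  (forall (j : nat) (B : set R), measurable B ->
     P (Xs j @^-1` B) = P (X @^-1` B)) ->
  (* uniform choice of the index *)
  (forall n i, (K < n)%N -> (i < n)%N -> P (I n @^-1` [set i]) = (n%:R^-1)%:E) ->
  (forall n w, (K < n)%N -> (I n w < n)%N) ->
  (* uniform choice of the neighbour rank *)
  (forall n k, (K < n)%N -> (k < K)%N -> P (kap n @^-1` [set k]) = (K%:R^-1)%:E) ->
  (forall n w, (K < n)%N -> (kap n w < K)%N) ->
  (* lambda ~ U(0,1) *)
  (forall n (B : set R), (K < n)%N -> measurable B ->
     P (lam n @^-1` B) = lebesgue_measure (B `&` `[0, 1])) ->
  (* mutual independence of X_1, ..., X_n, the index, the rank and lambda *)
  (forall n (B : nat -> set R) (i k : nat) (L : set R), (K < n)%N ->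
     (forall j, measurable (B j)) -> measurable L ->
     P ((\bigcap_(j in [set j | (j < n)%N]) (Xs j @^-1` B j))
          `&` (I n @^-1` [set i]) `&` (kap n @^-1` [set k]) `&` (lam n @^-1` L))
     = ((\prod_(j < n) P (Xs j @^-1` B j)) * P (I n @^-1` [set i])
          * P (kap n @^-1` [set k]) * P (lam n @^-1` L))%E) ->
  (* conclusion: Z_n - X_{I_n} --> 0 in probability *)
  forall eps : R, 0 < eps ->
    (fun n => P [set w | eps < `| smote [seq Xs j w | j <- iota 0 n] (I n w) (kap n w) (lam n w)
                                  - Xs (I n w) w |])
      @ \oo --> 0%E.
Proof.
(* X need not be atomless: sample points tied with X_i count as neighbours. *)
move=> K_gt0 _ Xs_law Idx_uniform Idx_lt kap_uniform kap_lt lam_uniform indep eps eps_gt0.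
exact: (far_cvg0 K_gt0 Xs_law Idx_uniform Idx_lt kap_uniform kap_lt lam_uniform indep eps_gt0).
Qed.
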